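(* Assume (A1), let $f_*\in\mathcal H_K$, let $\theta\in(0,1)$ with $\theta>\frac{q}{q+1}$, let $\eta_t=\eta_1t^{-\theta}$ with $\eta_1$ satisfying (R1), and let $T\ge2$. Let $g_T=a_T$ or $g_T=b_T$. Then $$\mathcal{E}_{\mathbf z}(g_T)-\mathcal{E}_{\mathbf z}(f_* )\le\Big(\frac{2\|f_*\|_K^2}{\eta_1}+\overline C_1\Big)\overline\Lambda_T,$$ where $\overline\Lambda_T=T^{-(1-\theta)}$ if $\theta>\frac{q+1}{q+2}$, $\overline\Lambda_T=(\log T)T^{-(1-\theta)}$ if $\theta=\frac{q+1}{q+2}$, $\overline\Lambda_T=T^{-(\theta(1+q)-q)}$ if $\theta<\frac{q+1}{q+2}$, and $\overline C_1>0$ is a constant depending only on $q,\kappa,\theta,\eta_1,c_q$ (not on $T$, $m$, $\mathbf z$, $f_*$).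
   Context: Setting. $X$ is a separable metric space, $Y\subseteq\mathbb{R}$, and $V:\mathbb{R}\times\mathbb{R}\to[0,\infty)$ is a measurable loss, convex in its second argument; $V'_-(y,a)$ denotes the left derivative of $a\mapsto V(y,a)$. A sample $\mathbf{z}=\{(x_i,y_i)\}_{i=1}^m\subset X\times Y$ is given, and $\mathcal{E}_{\mathbf z}(f)=\frac1m\sum_{i=1}^m V(y_i,f(x_i))$ is the empirical risk. $K:X\times X\to\mathbb{R}$ is a reproducing kernel with reproducing kernel Hilbert space $(\mathcal{H}_K,\|\cdot\|_K)$, $K_x=K(x,\cdot)$. Given step sizes $\eta_t>0$, the iterates are $f_1=0$ and $f_{t+1}=f_t-\eta_t\frac1m\sum_{j=1}^m V'_-(y_j,f_t(x_j))K_{x_j}$ for $t=1,\dots,T$. The weighted average iterate is $a_T=\sum_{t=1}^T\omega_tf_t$ with $\omega_t=\eta_t/\sum_{s=1}^T\eta_s$, and the best iterate is $b_T=\arg\min_{t=1,\dots,T}\mathcal{E}_{\mathbf z}(f_t)$. Assumption (A1) (parts used): $\kappa:=\sup_{x\in X}\sqrt{K(x,x)}<\infty$, $|V|_0:=\sup_{y\in Y}V(y,0)<\infty$, and there are $q\ge 0$, $c_q>0$ with $|V'_-(y,a)|\le c_q(1+|a|^q)$ for all $a\in\mathbb{R}$, $y\in Y$. Step-size condition (R1): $0<\eta_1\le\min\Big\{\frac{\sqrt{1-\theta}}{\sqrt2\,c_q(\kappa+1)^{q+1}},\ \frac{1-\theta}{4|V|_0}\Big\}$. *)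

From Stdlib Require Import Reals Lra.
Open Scope R_scope.

Fixpoint rsum (n : nat) (f : nat -> R) : R :=
  match n with
  | O => 0
  | S k => rsum k f + f k
  end.

(* |a|^q for q >= 0, with the convention 0^0 = 1 and 0^q = 0 for q > 0. *)
Definition abspow (a q : R) : R :=
  if Rlt_dec 0 (Rabs a) then Rpower (Rabs a) q
  else if Req_EM_T q 0 then 1 else 0.

(* A reproducing kernel Hilbert space over X, given abstractly: a real inner
   product space H whose elements are (injectively) real functions on X via
   [heval], together with the feature map x |-> K_x satisfying the
   reproducing property f(x) = <f, K_x>. *)
Record RKHS (X : Type) := {
  hcar :> Type;
  hzero : hcar;
  hadd : hcar -> hcar -> hcar;
  hscal : R -> hcar -> hcar;
  hip : hcar -> hcar -> R;
  hadd_assoc : forall u v w, hadd u (hadd v w) = hadd (hadd u v) w;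
  hadd_comm : forall u v, hadd u v = hadd v u;
  hadd_0 : forall u, hadd u hzero = u;
  hadd_opp : forall u, hadd u (hscal (-1) u) = hzero;
  hscal_1 : forall u, hscal 1 u = u;
  hscal_assoc : forall a b u, hscal a (hscal b u) = hscal (a * b) u;
  hscal_distr_v : forall a u v, hscal a (hadd u v) = hadd (hscal a u) (hscal a v);
  hscal_distr_s : forall a b u, hscal (a + b) u = hadd (hscal a u) (hscal b u);
  hip_sym : forall u v, hip u v = hip v u;
  hip_add_l : forall u v w, hip (hadd u v) w = hip u w + hip v w;
  hip_scal_l : forall a u v, hip (hscal a u) v = a * hip u v;
  hip_pos : forall u, 0 <= hip u u;
  hip_def : forall u, hip u u = 0 -> u = hzero;
  heval : hcar -> X -> R;
  heval_inj : forall f g, (forall x, heval f x = heval g x) -> f = g;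
  hfeat : X -> hcar;
  hreprod : forall f x, heval f x = hip f (hfeat x)
}.

Arguments hzero {X} _.
Arguments hadd {X} _ _ _.
Arguments hscal {X} _ _ _.
Arguments hip {X} _ _ _.
Arguments heval {X} _ _ _.
Arguments hfeat {X} _ _.

Definition kern {X} (H : RKHS X) (x y : X) : R := heval H (hfeat H x) y.

Definition hnorm2 {X} (H : RKHS X) (f : H) : R := hip H f f.

Fixpoint hsum {X} (H : RKHS X) (n : nat) (g : nat -> H) : H :=
  match n with
  | O => hzero H
  | S k => hadd H (hsum H k g) (g k)
  end.

Definition emp_risk {X} (H : RKHS X) (V : R -> R -> R) (m : nat)
  (xs : nat -> X) (ys : nat -> R) (f : H) : R :=
  / INR m * rsum m (fun i => V (ys i) (heval H f (xs i))).

Definition step (eta1 theta : R) (t : nat) : R := eta1 * Rpower (INR t) (- theta).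

(* Gradient-type iterates: gd k = f_{k+1}, i.e. gd 0 = f_1 = 0 and
   f_{t+1} = f_t - eta_t (1/m) sum_j V'_-(y_j, f_t(x_j)) K_{x_j}. *)
Fixpoint gd {X} (H : RKHS X) (Vd : R -> R -> R) (m : nat)
  (xs : nat -> X) (ys : nat -> R) (eta : nat -> R) (k : nat) : H :=
  match k with
  | O => hzero H
  | S k' =>
      let ft := gd H Vd m xs ys eta k' in
      hadd H ft
        (hscal H (- (eta (S k') / INR m))
           (hsum H m (fun j => hscal H (Vd (ys j) (heval H ft (xs j))) (hfeat H (xs j)))))
  end.

Definition iterate {X} (H : RKHS X) Vd m xs ys eta (t : nat) : H :=
  gd H Vd m xs ys eta (Nat.pred t).

Definition wavg {X} (H : RKHS X) Vd m xs ys (eta : nat -> R) (T : nat) : H :=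
  hsum H T (fun i => hscal H (eta (S i) / rsum T (fun s => eta (S s)))
                             (iterate H Vd m xs ys eta (S i))).

Definition LambdaT (q theta : R) (T : nat) : R :=
  let t := INR T in
  if Rlt_dec ((q + 1) / (q + 2)) theta then Rpower t (- (1 - theta))
  else if Req_EM_T theta ((q + 1) / (q + 2)) then ln t * Rpower t (- (1 - theta))
  else Rpower t (- (theta * (1 + q) - q)).

Definition is_left_deriv (V Vd : R -> R -> R) : Prop :=
  forall y a eps, 0 < eps -> exists delta, 0 < delta /\
    forall h, 0 < h < delta ->
      Rabs ((V y a - V y (a - h)) / h - Vd y a) < eps.

Definition convex_second (V : R -> R -> R) : Prop :=
  forall y a b l, 0 <= l <= 1 ->
    V y (l * a + (1 - l) * b) <= l * V y a + (1 - l) * V y b.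

(* By convexity, the subgradient inequality yields the one-step estimate
     ||f_{t+1} - f||^2 <= ||f_t - f||^2 - 2 eta_t (E_z(f_t) - E_z(f)) + eta_t^2 ||g_t||^2,
   with ||g_t|| <= kappa max_j |V'_-(y_j, f_t(x_j))|.  For f = 0, together with (R1), it
   gives by induction the a-priori bound ||f_t||^2 <= A t^(1-theta); so f_t grows like
   t^((1-theta)/2) and the noise term eta_t^2 ||g_t||^2 is O(t^(-(theta(q+2)-q))).
   For f = fstar the estimates telescope to
     sum_t 2 eta_t (E_z(f_t) - E_z(fstar)) <= ||fstar||^2 + O(sum_t t^(-(theta(q+2)-q))),
   and dividing by 2 sum_t eta_t >= 2 eta_1 T^(1-theta) bounds the eta-weighted average of
   the excess risks.  The three regimes of Lambda_T are those of this power sum.  Both a_T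
   (by Jensen) and b_T (a minimum) have empirical risk at most that weighted average. *)

From Stdlib Require Import Reals Lra Lia.
Open Scope R_scope.

Lemma rsum_ext n f g : (forall i, (i < n)%nat -> f i = g i) -> rsum n f = rsum n g.
Proof.
  induction n as [|n IH]; intros Hfg; cbn [rsum]; auto.
  rewrite IH by (intros; apply Hfg; lia). rewrite Hfg by lia. reflexivity.
Qed.

Lemma rsum_le n f g : (forall i, (i < n)%nat -> f i <= g i) -> rsum n f <= rsum n g.
Proof.
  induction n as [|n IH]; intros Hfg; cbn [rsum]; [lra|].
  assert (rsum n f <= rsum n g) by (apply IH; intros; apply Hfg; lia).
  assert (f n <= g n) by (apply Hfg; lia). lra.
Qed.

Lemma rsum_plus n f g : rsum n (fun i => f i + g i) = rsum n f + rsum n g.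
Proof. induction n as [|n IH]; cbn [rsum]; [lra | rewrite IH; lra]. Qed.

Lemma rsum_scal n c f : rsum n (fun i => c * f i) = c * rsum n f.
Proof. induction n as [|n IH]; cbn [rsum]; [lra | rewrite IH; lra]. Qed.

Lemma rsum_minus n f g : rsum n f - rsum n g = rsum n (fun i => f i - g i).
Proof.
  unfold Rminus at 2. rewrite rsum_plus.
  rewrite (rsum_ext n (fun i => - g i) (fun i => -1 * g i)) by (intros; ring).
  rewrite rsum_scal. ring.
Qed.

Lemma rsum_const n c : rsum n (fun _ => c) = INR n * c.
Proof. induction n as [|n IH]; cbn [rsum]; [simpl; ring | rewrite IH, S_INR; ring]. Qed.

Lemma rsum_const_le n c f : (forall i, (i < n)%nat -> c <= f i) -> INR n * c <= rsum n f.
Proof. intros Hf. rewrite <- rsum_const. apply rsum_le; auto. Qed.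

Lemma rsum_ge0 n f : (forall i, (i < n)%nat -> 0 <= f i) -> 0 <= rsum n f.
Proof. intros Hf. replace 0 with (INR n * 0) by ring. apply rsum_const_le; auto. Qed.

Lemma rsum_pos n f : (0 < n)%nat -> (forall i, (i < n)%nat -> 0 < f i) -> 0 < rsum n f.
Proof.
  intros Hn Hf. destruct n as [|n]; [lia|]. cbn [rsum].
  assert (0 <= rsum n f) by (apply rsum_ge0; intros; left; apply Hf; lia).
  specialize (Hf n ltac:(lia)). lra.
Qed.

Lemma rsum_abs n f : Rabs (rsum n f) <= rsum n (fun i => Rabs (f i)).
Proof.
  induction n as [|n IH]; cbn [rsum]; [rewrite Rabs_R0; lra|].
  eapply Rle_trans; [apply Rabs_triang | lra].
Qed.

Lemma rsum_swap n k (f : nat -> nat -> R) :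
  rsum n (fun i => rsum k (f i)) = rsum k (fun j => rsum n (fun i => f i j)).
Proof.
  induction n as [|n IH]; cbn [rsum].
  - rewrite rsum_const. ring.
  - rewrite IH, <- rsum_plus. reflexivity.
Qed.

Lemma rsum_telescope (Phi g w : nat -> R) T :
  (forall i, (i < T)%nat -> g i <= Phi i - Phi (S i) + w i) ->
  rsum T g <= Phi 0%nat - Phi T + rsum T w.
Proof.
  induction T as [|T IH]; intros Hg; cbn [rsum]; [lra|].
  assert (rsum T g <= Phi 0%nat - Phi T + rsum T w) by (apply IH; intros; apply Hg; lia).
  specialize (Hg T ltac:(lia)). lra.
Qed.

Lemma rsum_normalize T (e : nat -> R) :
  0 < rsum T e -> rsum T (fun i => e i / rsum T e) = 1.
Proof.
  intros He. rewrite (rsum_ext T _ (fun i => / rsum T e * e i)) by (intros; unfold Rdiv; ring).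
  rewrite rsum_scal. field. lra.
Qed.

Lemma rsum_weights_ge c T (w g : nat -> R) :
  (forall i, (i < T)%nat -> 0 <= w i) -> rsum T w = 1 ->
  (forall i, (i < T)%nat -> c <= g i) -> c <= rsum T (fun i => w i * g i).
Proof.
  intros Hw Hs Hg. replace c with (rsum T (fun i => w i * c)).
  - apply rsum_le. intros i Hi. apply Rmult_le_compat_l; auto.
  - rewrite (rsum_ext T _ (fun i => c * w i)) by (intros; ring). rewrite rsum_scal, Hs. ring.
Qed.

Lemma Rpower_1_l x : Rpower 1 x = 1.
Proof. unfold Rpower. rewrite ln_1, Rmult_0_r, exp_0. reflexivity. Qed.

Lemma Rpower_0_r_any b : Rpower b 0 = 1.
Proof. unfold Rpower. rewrite Rmult_0_l, exp_0. reflexivity. Qed.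

Lemma Rpower_pos x y : 0 < Rpower x y.
Proof. apply exp_pos. Qed.

Lemma Rpower_ge1 b p : 1 <= b -> 0 <= p -> 1 <= Rpower b p.
Proof. intros. rewrite <- (Rpower_0_r_any b). apply Rle_Rpower; auto. Qed.

Lemma Rpower_opp_le_contravar a x y : 0 <= a -> 0 < x <= y -> Rpower y (- a) <= Rpower x (- a).
Proof.
  intros. rewrite !Rpower_Ropp. apply Rinv_le_contravar; [apply Rpower_pos|].
  apply Rle_Rpower_l; auto.
Qed.

Lemma Rpower_succ_mvt x p : 0 < x -> exists c, x < c < x + 1 /\
  Rpower (x + 1) p - Rpower x p = p * Rpower c (p - 1).
Proof.
  intros Hx.
  destruct (MVT_cor2 (fun y => Rpower y p) (fun y => p * Rpower y (p - 1)) x (x + 1))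
    as [c [Hc1 Hc2]]; [lra | intros; apply derivable_pt_lim_power; lra |].
  exists c. split; auto. rewrite Hc1. ring.
Qed.

Definition gharm (a : R) (k : nat) : R := Rpower (INR (S k)) (- a).

Lemma gharm_pos a k : 0 < gharm a k.
Proof. apply Rpower_pos. Qed.

Lemma INR_S_pos k : 0 < INR (S k).
Proof. apply lt_0_INR; lia. Qed.

Lemma gharm_le_mvt a n : 0 <= a -> (1 <= n)%nat -> exists c,
  gharm a n <= Rpower c (- a) /\
  Rpower (INR (S n)) (1 - a) - Rpower (INR n) (1 - a) = (1 - a) * Rpower c (- a).
Proof.
  intros Ha Hn.
  assert (Hpos : 0 < INR n) by (apply lt_0_INR; lia).
  destruct (Rpower_succ_mvt (INR n) (1 - a) Hpos) as [c [Hc Hmvt]].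
  exists c. rewrite S_INR. replace (1 - a - 1) with (- a) in Hmvt by ring.
  repeat split; try lra.
  unfold gharm. rewrite S_INR. apply Rpower_opp_le_contravar; lra.
Qed.

Lemma gharm_sum_lt1 a n : 0 < a < 1 -> (1 <= n)%nat ->
  (1 - a) * rsum n (gharm a) <= Rpower (INR n) (1 - a).
Proof.
  intros Ha Hn. induction Hn as [|n Hn IH].
  - unfold gharm. simpl. rewrite Rplus_0_l, !Rpower_1_l. lra.
  - cbn [rsum]. destruct (gharm_le_mvt a n ltac:(lra) Hn) as [c [Hle Hinc]]. nra.
Qed.

Lemma gharm_sum_gt1 a n : 1 < a -> (1 <= n)%nat ->
  rsum n (gharm a) <= 1 + (1 - Rpower (INR n) (1 - a)) / (a - 1).
Proof.
  intros Ha Hn. induction Hn as [|n Hn IH].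
  - unfold gharm. simpl. rewrite Rplus_0_l, !Rpower_1_l. unfold Rdiv. lra.
  - cbn [rsum]. destruct (gharm_le_mvt a n ltac:(lra) Hn) as [c [Hle Hinc]].
    replace (Rpower (INR (S n)) (1 - a)) with (Rpower (INR n) (1 - a) + (1 - a) * Rpower c (- a))
      by lra.
    replace ((1 - (Rpower (INR n) (1 - a) + (1 - a) * Rpower c (- a))) / (a - 1))
      with ((1 - Rpower (INR n) (1 - a)) / (a - 1) + Rpower c (- a)) by (field; lra).
    lra.
Qed.

Lemma gharm_sum_1 n : (1 <= n)%nat -> rsum n (gharm 1) <= 1 + ln (INR n).
Proof.
  intros Hn. induction Hn as [|n Hn IH].
  - unfold gharm. simpl. rewrite Rplus_0_l, Rpower_1_l, ln_1. lra.
  - cbn [rsum]. assert (Hpos : 0 < INR n) by (apply lt_0_INR; lia).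
    assert (gharm 1 n <= ln (INR (S n)) - ln (INR n)); [|lra].
    unfold gharm. rewrite Rpower_Ropp, Rpower_1 by apply INR_S_pos. rewrite S_INR.
    (* 1/(n+1) <= ln ((n+1)/n) because exp (-1/(n+1)) >= 1 - 1/(n+1) = n/(n+1). *)
    destruct (Rlt_or_le (ln (INR n + 1) - ln (INR n)) (/ (INR n + 1))) as [Hc|Hc]; [exfalso|lra].
    assert (Hexp : exp (ln (INR n + 1) + - / (INR n + 1)) < exp (ln (INR n)))
      by (apply exp_increasing; lra).
    rewrite exp_plus, !exp_ln in Hexp by lra.
    pose proof (exp_ineq1_le (- / (INR n + 1))).
    assert ((INR n + 1) * (1 + - / (INR n + 1)) = INR n) by (field; lra).
    nra.
Qed.

Lemma gharm_sum_ge a T : 0 <= a -> (1 <= T)%nat -> Rpower (INR T) (1 - a) <= rsum T (gharm a).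
Proof.
  intros Ha HT. assert (HT' : 0 < INR T) by (apply lt_0_INR; lia).
  replace (Rpower (INR T) (1 - a)) with (INR T * Rpower (INR T) (- a)).
  - apply rsum_const_le. intros i Hi. apply Rpower_opp_le_contravar; auto.
    split; [apply INR_S_pos | apply le_INR; lia].
  - unfold Rminus. rewrite Rpower_plus, Rpower_1; auto.
Qed.

Lemma gharm_sum_lt1_succ a k : 0 < a < 1 ->
  (1 - a) * rsum k (gharm a) <= Rpower (INR (S k)) (1 - a).
Proof.
  intros Ha. destruct k as [|k].
  - simpl. rewrite Rmult_0_r. left; apply Rpower_pos.
  - eapply Rle_trans; [apply gharm_sum_lt1; auto; lia|].
    apply Rle_Rpower_l; [lra|]. split; [apply lt_0_INR; lia | apply le_INR; lia].
Qed.

Section HilbertFacts.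
Variables (X : Type) (H : RKHS X).

Lemma hip_add_r (u v w : H) : hip H u (hadd H v w) = hip H u v + hip H u w.
Proof. rewrite (hip_sym _ H u), hip_add_l, (hip_sym _ H v), (hip_sym _ H w). reflexivity. Qed.

Lemma hip_scal_r a (u v : H) : hip H u (hscal H a v) = a * hip H u v.
Proof. rewrite (hip_sym _ H u), hip_scal_l, (hip_sym _ H v). reflexivity. Qed.

Lemma hip_zero_l (v : H) : hip H (hzero H) v = 0.
Proof. rewrite <- (hadd_opp _ H (hzero H)), hip_add_l, hip_scal_l. ring. Qed.

Lemma hip_zero_r (v : H) : hip H v (hzero H) = 0.
Proof. rewrite hip_sym. apply hip_zero_l. Qed.

Lemma hip_hsum_l n g (v : H) : hip H (hsum H n g) v = rsum n (fun i => hip H (g i) v).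
Proof.
  induction n as [|n IH]; cbn [hsum rsum]; [apply hip_zero_l|].
  rewrite hip_add_l, IH. reflexivity.
Qed.

Lemma hip_expand (u v : H) l :
  hip H (hadd H u (hscal H l v)) (hadd H u (hscal H l v))
  = hip H u u + 2 * l * hip H u v + l * l * hip H v v.
Proof. rewrite hip_add_l, !hip_add_r, !hip_scal_l, !hip_scal_r, (hip_sym _ H v u). ring. Qed.

Lemma heval_add (u v : H) x : heval H (hadd H u v) x = heval H u x + heval H v x.
Proof. rewrite !hreprod, hip_add_l. reflexivity. Qed.

Lemma heval_scal a (u : H) x : heval H (hscal H a u) x = a * heval H u x.
Proof. rewrite !hreprod, hip_scal_l. reflexivity. Qed.

Lemma heval_zero x : heval H (hzero H) x = 0.
Proof. rewrite hreprod. apply hip_zero_l. Qed.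

Lemma heval_hsum n g x : heval H (hsum H n g) x = rsum n (fun i => heval H (g i) x).
Proof.
  induction n as [|n IH]; cbn [hsum rsum]; [apply heval_zero|].
  rewrite heval_add, IH. reflexivity.
Qed.

Lemma cauchy_schwarz (u v : H) : Rabs (hip H u v) <= sqrt (hip H u u) * sqrt (hip H v v).
Proof.
  pose proof (hip_pos _ H u) as Pu. pose proof (hip_pos _ H v) as Pv.
  destruct (Req_dec (hip H v v) 0) as [E|E].
  { apply hip_def in E. rewrite E, hip_zero_r, Rabs_R0. apply Rmult_le_pos; apply sqrt_pos. }
  set (a := hip H u u) in *. set (b := hip H v v) in *. set (c := hip H u v).
  assert (Q : c * c <= a * b).
  { pose proof (hip_pos _ H (hadd H u (hscal H (- c / b) v))) as P.
    rewrite hip_expand in P. fold a b c in P.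
    replace (a + 2 * (- c / b) * c + - c / b * (- c / b) * b) with (a - c * c / b) in P
      by (field; lra).
    assert (c * c / b * b = c * c) by (field; lra).
    assert (0 <= (a - c * c / b) * b) by (apply Rmult_le_pos; lra). nra. }
  rewrite <- sqrt_mult, <- sqrt_Rsqr_abs by lra. apply sqrt_le_1_alt. unfold Rsqr. lra.
Qed.

Lemma heval_bound kappa (f : H) x :
  (forall x, sqrt (kern H x x) <= kappa) -> Rabs (heval H f x) <= kappa * sqrt (hnorm2 H f).
Proof.
  intros Hk. rewrite hreprod. eapply Rle_trans; [apply cauchy_schwarz|].
  specialize (Hk x). unfold kern in Hk. rewrite hreprod in Hk.
  rewrite Rmult_comm. apply Rmult_le_compat_r; [apply sqrt_pos | exact Hk].
Qed.

Definition hdist2 (u f : H) : R := hnorm2 H (hadd H u (hscal H (-1) f)).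

Lemma hdist2E (u f : H) : hdist2 u f = hnorm2 H u - 2 * hip H u f + hnorm2 H f.
Proof. unfold hdist2, hnorm2. rewrite hip_expand. ring. Qed.

Lemma hdist2_ge0 (u f : H) : 0 <= hdist2 u f.
Proof. apply hip_pos. Qed.

Lemma hdist2_0_l (f : H) : hdist2 (hzero H) f = hnorm2 H f.
Proof. rewrite hdist2E. unfold hnorm2. rewrite !hip_zero_l. ring. Qed.

Lemma hdist2_0_r (u : H) : hdist2 u (hzero H) = hnorm2 H u.
Proof. rewrite hdist2E. unfold hnorm2. rewrite hip_zero_r, hip_zero_l. ring. Qed.

Lemma hdist2_step (u f g : H) s :
  hdist2 (hadd H u (hscal H s g)) f = hdist2 u f + 2 * s * (hip H g u - hip H g f) + s * s * hnorm2 H g.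
Proof.
  rewrite !hdist2E. unfold hnorm2. rewrite hip_expand, hip_add_l, hip_scal_l, (hip_sym _ H u g). ring.
Qed.

End HilbertFacts.

Section ConvexLoss.
Variables (V Vd : R -> R -> R).
Hypotheses (V_convex : convex_second V) (Vd_left_deriv : is_left_deriv V Vd).

Lemma subgrad_left y a b : b < a -> V y a + Vd y a * (b - a) <= V y b.
Proof.
  intros Hba. destruct (Rle_or_lt (V y a + Vd y a * (b - a)) (V y b)) as [OK|NO]; [exact OK|exfalso].
  set (d := a - b). assert (Hd : 0 < d) by (unfold d; lra).
  set (P := (V y a - V y b) / d).
  assert (EP : P * d = V y a - V y b) by (unfold P; field; lra).
  assert (HP : Vd y a < P) by (apply (Rmult_lt_reg_r d); [lra | rewrite EP; unfold d; lra]).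
  destruct (Vd_left_deriv y a (P - Vd y a) ltac:(lra)) as [del [Hdel Hh]].
  set (h := Rmin (del / 2) d).
  assert (Hh1 : 0 < h) by (unfold h; apply Rmin_glb_lt; lra).
  assert (Hh2 : h < del) by (unfold h; eapply Rle_lt_trans; [apply Rmin_l | lra]).
  assert (Hh3 : h <= d) by (unfold h; apply Rmin_r).
  specialize (Hh h (conj Hh1 Hh2)). apply Rabs_def2 in Hh. destruct Hh as [Hh _].
  set (Q := (V y a - V y (a - h)) / h) in *.
  assert (EQ : Q * h = V y a - V y (a - h)) by (unfold Q; field; lra).
  (* a - h is a convex combination of b and a, so the difference quotient Q is at least P *)
  pose proof (V_convex y b a (h / d)) as C.
  replace (h / d * b + (1 - h / d) * a) with (a - h) in C by (unfold d; field; lra).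
  replace (h / d * V y b + (1 - h / d) * V y a) with (V y a - h * P) in C
    by (replace (V y b) with (V y a - P * d) by lra; field; lra).
  assert (0 <= h / d <= 1) by (split; [apply Rlt_le, Rdiv_lt_0_compat; lra |
    apply (Rmult_le_reg_r d); [lra | unfold Rdiv; rewrite Rmult_assoc, Rinv_l by lra; lra]]).
  specialize (C ltac:(assumption)). nra.
Qed.

Lemma subgrad_right y a b : a < b -> V y a + Vd y a * (b - a) <= V y b.
Proof.
  intros Hab. destruct (Rle_or_lt (V y a + Vd y a * (b - a)) (V y b)) as [OK|NO]; [exact OK|exfalso].
  set (d := b - a). assert (Hd : 0 < d) by (unfold d; lra).
  set (P := (V y b - V y a) / d).
  assert (EP : P * d = V y b - V y a) by (unfold P; field; lra).
  assert (HP : P < Vd y a) by (apply (Rmult_lt_reg_r d); [lra | rewrite EP; unfold d; lra]).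
  destruct (Vd_left_deriv y a (Vd y a - P) ltac:(lra)) as [del [Hdel Hh]].
  set (h := del / 2). assert (Hh1 : 0 < h < del) by (unfold h; lra).
  specialize (Hh h Hh1).
  apply Rabs_def2 in Hh. destruct Hh as [_ Hh].
  set (Q := (V y a - V y (a - h)) / h) in *.
  assert (EQ : Q * h = V y a - V y (a - h)) by (unfold Q; field; lra).
  (* a is a convex combination of a - h and b, so the difference quotient Q is at most P *)
  set (l := d / (d + h)).
  assert (Hl : 0 <= l <= 1) by (unfold l; split; [apply Rlt_le, Rdiv_lt_0_compat; lra |
    apply (Rmult_le_reg_r (d + h)); [lra | unfold Rdiv; rewrite Rmult_assoc, Rinv_l by lra; lra]]).
  pose proof (V_convex y (a - h) b l Hl) as C.
  replace (l * (a - h) + (1 - l) * b) with a in C by (unfold l, d; field; lra).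
  assert (C2 : (d + h) * V y a <= d * V y (a - h) + h * V y b).
  { replace (d * V y (a - h) + h * V y b) with ((d + h) * (l * V y (a - h) + (1 - l) * V y b))
      by (unfold l; field; lra).
    apply Rmult_le_compat_l; lra. }
  assert (d * (Q * h) <= h * (P * d)) by (rewrite EQ, EP; lra).
  assert (0 < d * h) by (apply Rmult_lt_0_compat; lra).
  nra.
Qed.

Lemma subgrad y a b : V y a + Vd y a * (b - a) <= V y b.
Proof.
  destruct (Rtotal_order b a) as [Hba|[->|Hab]].
  - apply subgrad_left; exact Hba.
  - lra.
  - apply subgrad_right; exact Hab.
Qed.

Lemma jensen_convex_second n (w a : nat -> R) y :
  (forall i, (i < n)%nat -> 0 <= w i) -> rsum n w = 1 ->
  V y (rsum n (fun i => w i * a i)) <= rsum n (fun i => w i * V y (a i)).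
Proof.
  intros Hw Hs. set (b := rsum n (fun i => w i * a i)).
  assert (E : rsum n (fun i => w i * (V y b + Vd y b * (a i - b))) = V y b).
  { rewrite (rsum_ext n _ (fun i => (V y b - Vd y b * b) * w i + Vd y b * (w i * a i)))
      by (intros; ring).
    rewrite rsum_plus, !rsum_scal, Hs. fold b. ring. }
  rewrite <- E. apply rsum_le. intros i Hi. apply Rmult_le_compat_l; [auto | apply subgrad].
Qed.

End ConvexLoss.

Section GradientStep.
Variables (X : Type) (H : RKHS X) (V Vd : R -> R -> R) (m : nat) (xs : nat -> X) (ys : nat -> R).
Hypotheses (V_convex : convex_second V) (Vd_left_deriv : is_left_deriv V Vd) (m_pos : (0 < m)%nat).

Definition emp_grad (u : H) : H :=
  hsum H m (fun j => hscal H (Vd (ys j) (heval H u (xs j))) (hfeat H (xs j))).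

Lemma gd_S eta k : gd H Vd m xs ys eta (S k) =
  hadd H (gd H Vd m xs ys eta k) (hscal H (- (eta (S k) / INR m)) (emp_grad (gd H Vd m xs ys eta k))).
Proof. reflexivity. Qed.

Lemma hip_emp_grad (u g : H) :
  hip H (emp_grad u) g = rsum m (fun j => Vd (ys j) (heval H u (xs j)) * heval H g (xs j)).
Proof.
  unfold emp_grad. rewrite hip_hsum_l. apply rsum_ext. intros j _.
  rewrite hip_scal_l, hip_sym, <- hreprod. reflexivity.
Qed.

Lemma emp_grad_norm2_le (u : H) kappa L :
  (forall x, sqrt (kern H x x) <= kappa) -> 0 <= kappa ->
  (forall j, (j < m)%nat -> Rabs (Vd (ys j) (heval H u (xs j))) <= L) ->
  hnorm2 H (emp_grad u) <= (kappa * (INR m * L)) * (kappa * (INR m * L)).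
Proof.
  intros Hk Hk0 HL. unfold hnorm2.
  set (K := kappa * rsum m (fun j => Rabs (Vd (ys j) (heval H u (xs j))))).
  assert (HK : 0 <= K) by (apply Rmult_le_pos; [auto | apply rsum_ge0; intros; apply Rabs_pos]).
  assert (HK2 : K <= kappa * (INR m * L)).
  { apply Rmult_le_compat_l; [auto|]. rewrite <- rsum_const. apply rsum_le; auto. }
  set (r := sqrt (hip H (emp_grad u) (emp_grad u))).
  assert (Hr : 0 <= r) by apply sqrt_pos.
  assert (Hrr : r * r = hip H (emp_grad u) (emp_grad u)) by (apply sqrt_sqrt, hip_pos).
  (* Cauchy-Schwarz on each term gives ||grad||^2 <= K ||grad||, hence ||grad|| <= K. *)
  assert (B : hip H (emp_grad u) (emp_grad u) <= K * r).
  { rewrite hip_emp_grad at 1. eapply Rle_trans; [apply Rle_abs|].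
    eapply Rle_trans; [apply rsum_abs|].
    replace (K * r) with (rsum m (fun j => Rabs (Vd (ys j) (heval H u (xs j))) * (kappa * r)))
      by (unfold K; rewrite (rsum_ext m _ (fun j => kappa * r * Rabs (Vd (ys j) (heval H u (xs j)))))
            by (intros; ring); rewrite rsum_scal; ring).
    apply rsum_le. intros j _. rewrite Rabs_mult.
    apply Rmult_le_compat_l; [apply Rabs_pos | apply heval_bound; auto]. }
  assert (r <= K) by nra.
  rewrite <- Hrr. apply Rmult_le_compat; lra.
Qed.

Lemma dist2_gd_step (u f : H) eta kappa L :
  0 < eta -> (forall x, sqrt (kern H x x) <= kappa) -> 0 <= kappa ->
  (forall j, (j < m)%nat -> Rabs (Vd (ys j) (heval H u (xs j))) <= L) ->
  hdist2 X H (hadd H u (hscal H (- (eta / INR m)) (emp_grad u))) f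
    <= hdist2 X H u f - 2 * eta * (emp_risk H V m xs ys u - emp_risk H V m xs ys f)
       + eta * eta * (kappa * L) * (kappa * L).
Proof.
  intros He Hk Hk0 HL.
  assert (Hm : 0 < INR m) by (apply lt_0_INR; lia).
  rewrite hdist2_step, !hip_emp_grad.
  assert (D : rsum m (fun j => V (ys j) (heval H u (xs j))) - rsum m (fun j => V (ys j) (heval H f (xs j)))
    <= rsum m (fun j => Vd (ys j) (heval H u (xs j)) * heval H u (xs j)) -
       rsum m (fun j => Vd (ys j) (heval H u (xs j)) * heval H f (xs j))).
  { rewrite !rsum_minus. apply rsum_le. intros j _.
    pose proof (subgrad V Vd V_convex Vd_left_deriv (ys j) (heval H u (xs j)) (heval H f (xs j))). nra. }
  pose proof (emp_grad_norm2_le u kappa L Hk Hk0 HL) as N.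
  unfold emp_risk.
  set (A := rsum m (fun j => V (ys j) (heval H u (xs j)))) in *.
  set (B := rsum m (fun j => V (ys j) (heval H f (xs j)))) in *.
  set (G := hnorm2 H (emp_grad u)) in *.
  set (C1 := rsum m (fun j => Vd (ys j) (heval H u (xs j)) * heval H u (xs j))) in *.
  set (C2 := rsum m (fun j => Vd (ys j) (heval H u (xs j)) * heval H f (xs j))) in *.
  assert (Hs : 0 < eta / INR m) by (apply Rdiv_lt_0_compat; lra).
  assert (E1 : 2 * - (eta / INR m) * (C1 - C2) <= - 2 * eta * (/ INR m * A - / INR m * B)).
  { replace (- 2 * eta * (/ INR m * A - / INR m * B)) with (2 * - (eta / INR m) * (A - B))
      by (field; lra).
    apply Rmult_le_compat_neg_l; lra. }
  assert (E2 : - (eta / INR m) * - (eta / INR m) * G <= eta * eta * (kappa * L) * (kappa * L)).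
  { replace (eta * eta * (kappa * L) * (kappa * L)) with
      ((eta / INR m) * (eta / INR m) * ((kappa * (INR m * L)) * (kappa * (INR m * L)))) by (field; lra).
    replace (- (eta / INR m) * - (eta / INR m) * G) with ((eta / INR m) * (eta / INR m) * G) by ring.
    apply Rmult_le_compat_l; nra. }
  lra.
Qed.

Lemma emp_risk_ge0 (u : H) : (forall y a, 0 <= V y a) -> 0 <= emp_risk H V m xs ys u.
Proof.
  intros HV. unfold emp_risk. apply Rmult_le_pos.
  - left. apply Rinv_0_lt_compat, lt_0_INR. lia.
  - apply rsum_ge0. auto.
Qed.

Lemma emp_risk_zero_le V0 :
  (forall j, (j < m)%nat -> V (ys j) 0 <= V0) -> emp_risk H V m xs ys (hzero H) <= V0.
Proof.
  intros HV0. unfold emp_risk. assert (Hm : 0 < INR m) by (apply lt_0_INR; lia).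
  assert (rsum m (fun i => V (ys i) (heval H (hzero H) (xs i))) <= INR m * V0).
  { rewrite <- rsum_const. apply rsum_le. intros. rewrite heval_zero. auto. }
  apply (Rmult_le_compat_l (/ INR m)) in H0; [|left; apply Rinv_0_lt_compat; auto].
  replace (/ INR m * (INR m * V0)) with V0 in H0 by (field; lra). exact H0.
Qed.

Lemma emp_risk_wavg_le eta T :
  (forall i, (i < T)%nat -> 0 <= eta (S i) / rsum T (fun s => eta (S s))) ->
  rsum T (fun i => eta (S i) / rsum T (fun s => eta (S s))) = 1 ->
  emp_risk H V m xs ys (wavg H Vd m xs ys eta T) <=
  rsum T (fun i => eta (S i) / rsum T (fun s => eta (S s)) * emp_risk H V m xs ys (gd H Vd m xs ys eta i)).
Proof.
  intros Hw Hs. set (w := fun i => eta (S i) / rsum T (fun s => eta (S s))) in *.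
  unfold emp_risk.
  transitivity (/ INR m * rsum m (fun j =>
    rsum T (fun i => w i * V (ys j) (heval H (gd H Vd m xs ys eta i) (xs j))))).
  - apply Rmult_le_compat_l; [left; apply Rinv_0_lt_compat, lt_0_INR; lia|].
    apply rsum_le. intros j _. unfold wavg. rewrite heval_hsum.
    rewrite (rsum_ext T _ (fun i => w i * heval H (gd H Vd m xs ys eta i) (xs j)))
      by (intros; rewrite heval_scal; reflexivity).
    apply (jensen_convex_second V Vd V_convex Vd_left_deriv T w); auto.
  - right. rewrite <- rsum_swap, <- (rsum_scal T (/ INR m)). apply rsum_ext. intros i _.
    rewrite (rsum_scal m (w i)). unfold w. ring.
Qed.

End GradientStep.

(* The constant A of the a-priori bound ||f_t||^2 <= A t^(1-theta).  It has to
   satisfy (kappa (1 + (kappa sqrt A)^q))^2 <= (2A - 1) (kappa + 1)^(2(q+1))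
   ([norm_const_spec]); for q < 1 this needs more room than A = 1. *)
Definition norm_const (q : R) : R := if Rle_dec 1 q then 1 else 9.

Lemma norm_const_ge1 q : 1 <= norm_const q.
Proof. unfold norm_const. destruct Rle_dec; lra. Qed.

Definition noise_const (q theta : R) : R := (2 * norm_const q - 1) * (1 - theta) / 2.

Lemma noise_const_ge0 q theta : theta < 1 -> 0 <= noise_const q theta.
Proof.
  intros Hth. pose proof (norm_const_ge1 q). unfold noise_const.
  assert (0 <= (2 * norm_const q - 1) * (1 - theta)) by nra. lra.
Qed.

Lemma norm_const_spec q kappa : 0 <= q -> 0 <= kappa ->
  let B := kappa * (1 + Rpower (kappa * sqrt (norm_const q)) q) in
  B * B <= (2 * norm_const q - 1) * (Rpower (kappa + 1) (q + 1) * Rpower (kappa + 1) (q + 1)).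
Proof.
  intros Hq Hk B. set (P1 := Rpower (kappa + 1) (q + 1)).
  assert (HP1 : 0 < P1) by apply Rpower_pos.
  destruct (Req_dec kappa 0) as [->|E].
  { unfold B. rewrite Rmult_0_l. pose proof (norm_const_ge1 q). nra. }
  assert (Hk' : 0 < kappa) by lra.
  unfold B, norm_const in *. destruct (Rle_dec 1 q) as [Hq1|Hq1].
  - rewrite sqrt_1, Rmult_1_r.
    assert (kappa * (1 + Rpower kappa q) <= P1).
    { unfold P1. rewrite Rpower_plus, Rpower_1 by lra.
      assert (kappa + 1 <= Rpower (kappa + 1) q).
      { rewrite <- (Rpower_1 (kappa + 1)) at 1 by lra. apply Rle_Rpower; lra. }
      assert (Rpower kappa q <= Rpower (kappa + 1) q) by (apply Rle_Rpower_l; lra).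
      pose proof (Rpower_pos kappa q). nra. }
    assert (0 <= kappa * (1 + Rpower kappa q)) by (pose proof (Rpower_pos kappa q); nra).
    nra.
  - replace (sqrt 9) with 3 by (symmetry; apply sqrt_lem_1; lra).
    rewrite <- Rpower_mult_distr by lra.
    assert (H3 : Rpower 3 q <= 3) by (rewrite <- (Rpower_1 3) at 2 by lra; apply Rle_Rpower; lra).
    assert (kappa * Rpower kappa q <= P1).
    { unfold P1. rewrite <- (Rpower_1 kappa) at 1 by lra. rewrite <- Rpower_plus, Rplus_comm.
      apply Rle_Rpower_l; lra. }
    assert (kappa + 1 <= P1).
    { unfold P1. rewrite <- (Rpower_1 (kappa + 1)) at 1 by lra. apply Rle_Rpower; lra. }
    pose proof (Rpower_pos kappa q) as Ha. pose proof (Rpower_pos 3 q) as Hb.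
    assert (kappa * Rpower kappa q * Rpower 3 q <= kappa * Rpower kappa q * 3)
      by (apply Rmult_le_compat_l; nra).
    assert (kappa * (1 + Rpower kappa q * Rpower 3 q) <= 4 * P1).
    { replace (kappa * (1 + Rpower kappa q * Rpower 3 q)) with
        (kappa + kappa * Rpower kappa q * Rpower 3 q) by ring. lra. }
    assert (0 <= kappa * (1 + Rpower kappa q * Rpower 3 q))
      by (pose proof (Rmult_lt_0_compat _ _ Ha Hb); apply Rmult_le_pos; lra).
    assert (kappa * (1 + Rpower kappa q * Rpower 3 q) * (kappa * (1 + Rpower kappa q * Rpower 3 q))
            <= 4 * P1 * (4 * P1)) by (apply Rmult_le_compat; lra).
    nra.
Qed.

Lemma step_size_cond_sq q cq theta eta1 kappa : 0 < cq -> theta < 1 -> 0 < eta1 ->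
  eta1 <= sqrt (1 - theta) / (sqrt 2 * cq * Rpower (kappa + 1) (q + 1)) ->
  2 * (eta1 * eta1) * (cq * cq) * (Rpower (kappa + 1) (q + 1) * Rpower (kappa + 1) (q + 1)) <= 1 - theta.
Proof.
  intros Hcq Hth He R1. set (P1 := Rpower (kappa + 1) (q + 1)) in *.
  assert (HP1 : 0 < P1) by apply Rpower_pos.
  assert (Hs2 : 0 < sqrt 2) by (apply sqrt_lt_R0; lra).
  assert (HD : 0 < sqrt 2 * cq * P1) by (repeat apply Rmult_lt_0_compat; lra).
  assert (Hle : eta1 * (sqrt 2 * cq * P1) <= sqrt (1 - theta)).
  { apply (Rmult_le_compat_r (sqrt 2 * cq * P1)) in R1; [|lra].
    replace (sqrt (1 - theta) / (sqrt 2 * cq * P1) * (sqrt 2 * cq * P1)) with (sqrt (1 - theta)) in R1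
      by (field; lra). exact R1. }
  assert (0 <= eta1 * (sqrt 2 * cq * P1)) by nra.
  pose proof (sqrt_sqrt (1 - theta) ltac:(lra)). pose proof (sqrt_sqrt 2 ltac:(lra)).
  assert (eta1 * (sqrt 2 * cq * P1) * (eta1 * (sqrt 2 * cq * P1)) <= sqrt (1 - theta) * sqrt (1 - theta))
    by (apply Rmult_le_compat; assumption).
  nra.
Qed.

(* Bound on |V'_-(y, f_t(x))| implied by ||f_t||^2 <= A t^(1-theta) and (A1). *)
Definition grad_bound (q cq theta kappa : R) (t : nat) : R :=
  cq * (1 + Rpower (kappa * sqrt (norm_const q) * Rpower (INR t) ((1 - theta) / 2)) q).

Lemma abspow_le a b q : 0 <= q -> Rabs a <= b -> abspow a q <= Rpower b q.
Proof.
  intros Hq Hab. unfold abspow. destruct (Rlt_dec 0 (Rabs a)).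
  - apply Rle_Rpower_l; auto; lra.
  - destruct (Req_EM_T q 0) as [->|]; [rewrite Rpower_0_r_any; lra | left; apply Rpower_pos].
Qed.

Lemma grad_bound_of_norm2 X (H : RKHS X) (Y : R -> Prop) Vd m xs ys (u : H) q cq theta kappa (t : nat) :
  0 <= q -> 0 < cq -> (1 <= t)%nat ->
  (forall x, sqrt (kern H x x) <= kappa) -> 0 <= kappa ->
  (forall i, (i < m)%nat -> Y (ys i)) ->
  (forall y a, Y y -> Rabs (Vd y a) <= cq * (1 + abspow a q)) ->
  hnorm2 H u <= norm_const q * Rpower (INR t) (1 - theta) ->
  forall j, (j < m)%nat -> Rabs (Vd (ys j) (heval H u (xs j))) <= grad_bound q cq theta kappa t.
Proof.
  intros Hq Hcq Ht Hk Hk0 HY HVd Hu j Hj.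
  eapply Rle_trans; [apply HVd; auto|].
  apply Rmult_le_compat_l; [lra|]. apply Rplus_le_compat_l, abspow_le; [exact Hq|].
  eapply Rle_trans; [apply heval_bound; eauto|]. rewrite Rmult_assoc. apply Rmult_le_compat_l; [exact Hk0|].
  replace (Rpower (INR t) ((1 - theta) / 2)) with (sqrt (Rpower (INR t) (1 - theta))).
  - pose proof (norm_const_ge1 q).
    rewrite <- sqrt_mult by (lra || (left; apply Rpower_pos)). apply sqrt_le_1_alt. exact Hu.
  - rewrite <- Rpower_sqrt by apply Rpower_pos. rewrite Rpower_mult. reflexivity.
Qed.

Lemma kappa_grad_bound_le q cq theta kappa (t : nat) : 0 <= q -> 0 < cq -> theta < 1 -> 0 <= kappa ->
  (1 <= t)%nat ->
  0 <= kappa * grad_bound q cq theta kappa t <=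
  cq * (kappa * (1 + Rpower (kappa * sqrt (norm_const q)) q)) * Rpower (INR t) (q * (1 - theta) / 2).
Proof.
  intros Hq Hcq Hth Hk Ht. unfold grad_bound.
  assert (Htp : 1 <= INR t) by (apply (le_INR 1); auto).
  set (W := Rpower (kappa * sqrt (norm_const q)) q). assert (HW : 0 < W) by apply Rpower_pos.
  set (Rq := Rpower (INR t) (q * (1 - theta) / 2)).
  assert (HRq : 1 <= Rq) by (apply Rpower_ge1; [lra | apply Rmult_le_pos; [nra | lra]]).
  destruct (Req_dec kappa 0) as [->|E]; [rewrite !Rmult_0_l, Rmult_0_r; lra|].
  assert (HA : 0 < sqrt (norm_const q)) by (apply sqrt_lt_R0; pose proof (norm_const_ge1 q); lra).
  rewrite <- Rpower_mult_distr by (apply Rpower_pos || (apply Rmult_lt_0_compat; lra)).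
  rewrite Rpower_mult. replace ((1 - theta) / 2 * q) with (q * (1 - theta) / 2) by field. fold W Rq.
  split; [apply Rmult_le_pos; [lra | apply Rmult_le_pos; nra]|].
  assert (cq * kappa <= cq * kappa * Rq)
    by (rewrite <- (Rmult_1_r (cq * kappa)) at 1; apply Rmult_le_compat_l; nra).
  replace (kappa * (cq * (1 + W * Rq))) with (cq * kappa + cq * kappa * W * Rq) by ring.
  replace (cq * (kappa * (1 + W)) * Rq) with (cq * kappa * Rq + cq * kappa * W * Rq) by ring.
  lra.
Qed.

Lemma sq_step_grad_bound_le q cq theta eta1 kappa (t : nat) :
  0 <= q -> 0 < cq -> 0 < theta < 1 -> 0 < eta1 -> 0 <= kappa -> (1 <= t)%nat ->
  eta1 <= sqrt (1 - theta) / (sqrt 2 * cq * Rpower (kappa + 1) (q + 1)) ->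
  let L := grad_bound q cq theta kappa t in
  step eta1 theta t * step eta1 theta t * (kappa * L) * (kappa * L)
   <= noise_const q theta * Rpower (INR t) (q * (1 - theta) - 2 * theta).
Proof.
  intros Hq Hcq Hth He Hk Ht R1 L. unfold noise_const.
  pose proof (step_size_cond_sq q cq theta eta1 kappa Hcq ltac:(lra) He R1) as R1sq.
  pose proof (norm_const_spec q kappa Hq Hk) as HA. cbv zeta in HA.
  destruct (kappa_grad_bound_le q cq theta kappa t Hq Hcq ltac:(lra) Hk Ht) as [HKL0 HKL].
  fold L in HKL0, HKL.
  set (P1 := Rpower (kappa + 1) (q + 1)) in *.
  set (B := kappa * (1 + Rpower (kappa * sqrt (norm_const q)) q)) in *.
  set (Rq := Rpower (INR t) (q * (1 - theta) / 2)) in *.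
  set (Et := Rpower (INR t) (- 2 * theta)). assert (HEt : 0 < Et) by apply Rpower_pos.
  assert (HRq : 0 < Rq) by apply Rpower_pos.
  assert (HA1 : 1 <= norm_const q) by apply norm_const_ge1.
  assert (Hsq : step eta1 theta t * step eta1 theta t = eta1 * eta1 * Et).
  { unfold step, Et. replace (- 2 * theta) with (- theta + - theta) by ring. rewrite Rpower_plus. ring. }
  assert (Hexp : Rpower (INR t) (q * (1 - theta) - 2 * theta) = Et * (Rq * Rq)).
  { unfold Et, Rq. rewrite <- !Rpower_plus. f_equal. field. }
  rewrite Hsq, Hexp.
  assert (HKL2 : kappa * L * (kappa * L) <= cq * cq * (B * B) * (Rq * Rq)) by nra.
  assert (HB : cq * cq * (B * B) <= cq * cq * ((2 * norm_const q - 1) * (P1 * P1)))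
    by (apply Rmult_le_compat_l; nra).
  assert (Hc : eta1 * eta1 * (cq * cq * ((2 * norm_const q - 1) * (P1 * P1)))
               <= (2 * norm_const q - 1) * (1 - theta) / 2) by nra.
  assert (0 <= Et * (Rq * Rq)) by nra.
  apply Rle_trans with (eta1 * eta1 * (cq * cq * ((2 * norm_const q - 1) * (P1 * P1))) * (Et * (Rq * Rq))).
  - replace (eta1 * eta1 * Et * (kappa * L) * (kappa * L)) with
      (eta1 * eta1 * Et * (kappa * L * (kappa * L))) by ring.
    apply Rle_trans with (eta1 * eta1 * Et * (cq * cq * ((2 * norm_const q - 1) * (P1 * P1)) * (Rq * Rq))).
    + apply Rmult_le_compat_l; nra.
    + right. ring.
  - apply Rmult_le_compat_r; lra.
Qed.

Lemma step_pos eta1 theta t : 0 < eta1 -> 0 < step eta1 theta t.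
Proof. intros He. apply Rmult_lt_0_compat; [exact He | apply Rpower_pos]. Qed.

Lemma q_lt_theta_mul q theta : 0 <= q -> q / (q + 1) < theta -> q < theta * (q + 1).
Proof.
  intros Hq Hqt. apply (Rmult_lt_compat_r (q + 1)) in Hqt; [|lra].
  replace (q / (q + 1) * (q + 1)) with q in Hqt by (field; lra). lra.
Qed.

(* [rate_const] bounds sum_{t<=T} t^(-a) T^(-(1-theta)) / Lambda_T with a = theta (q+2) - q; in the
   critical case a = 1 it uses 1 + ln T <= 3 ln T, valid since ln T > 1/2 for T >= 2. *)
Definition rate_const (q theta : R) : R :=
  let a := theta * (q + 2) - q in
  if Rlt_dec ((q + 1) / (q + 2)) theta then a / (a - 1)
  else if Req_EM_T theta ((q + 1) / (q + 2)) then 3 else 1 / (1 - a).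

Lemma rate_exponent_cases q theta : 0 <= q ->
  let a := theta * (q + 2) - q in
  ((q + 1) / (q + 2) < theta <-> 1 < a) /\ (theta = (q + 1) / (q + 2) <-> a = 1).
Proof.
  intros Hq a. unfold a.
  assert (E : forall r, r * (q + 2) - q - 1 = (r - (q + 1) / (q + 2)) * (q + 2)) by (intros; field; lra).
  split; split; intros Hc.
  - pose proof (E theta). nra.
  - pose proof (E theta). nra.
  - subst theta. field. lra.
  - pose proof (E theta). apply (Rmult_eq_reg_r (q + 2)); nra.
Qed.

Lemma rate_const_ge0 q theta : 0 <= q -> q / (q + 1) < theta -> 0 <= rate_const q theta.
Proof.
  intros Hq Hqt. pose proof (rate_exponent_cases q theta Hq) as [C1 C2]. unfold rate_const.
  destruct (Rlt_dec _ theta) as [Hgt|Hgt]; [apply C1 in Hgt; apply Rlt_le, Rdiv_lt_0_compat; lra|].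
  destruct (Req_EM_T _ _) as [Heq|Hne]; [lra|].
  assert (~ (1 < theta * (q + 2) - q)) by (rewrite <- C1; exact Hgt).
  assert (theta * (q + 2) - q <> 1) by (rewrite <- C2; exact Hne).
  apply Rlt_le, Rdiv_lt_0_compat; lra.
Qed.

Lemma ln_ge_half T : (2 <= T)%nat -> / 2 < ln (INR T).
Proof.
  intros HT. assert (HT1 : 2 <= INR T) by (apply (le_INR 2); auto).
  eapply Rlt_le_trans; [apply ln_lt_2|].
  destruct (Req_dec (INR T) 2) as [->|E]; [lra | left; apply ln_increasing; lra].
Qed.

Lemma gharm_sum_rate q theta T : 0 <= q -> 0 < theta < 1 -> q / (q + 1) < theta -> (2 <= T)%nat ->
  rsum T (gharm (theta * (q + 2) - q)) * Rpower (INR T) (- (1 - theta))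
  <= rate_const q theta * LambdaT q theta T.
Proof.
  intros Hq Hth Hqt HT. pose proof (rate_exponent_cases q theta Hq) as [C1 C2].
  set (a := theta * (q + 2) - q) in *.
  assert (HT1 : (1 <= T)%nat) by lia.
  assert (Ha0 : 0 < a) by (pose proof (q_lt_theta_mul q theta Hq Hqt); unfold a; lra).
  set (Pm := Rpower (INR T) (- (1 - theta))). assert (HPm : 0 < Pm) by apply Rpower_pos.
  unfold rate_const, LambdaT. cbv zeta. fold a Pm.
  destruct (Rlt_dec _ theta) as [Hgt|Hgt].
  - apply C1 in Hgt. pose proof (gharm_sum_gt1 a T Hgt HT1). pose proof (Rpower_pos (INR T) (1 - a)).
    apply Rmult_le_compat_r; [lra|].
    replace (a / (a - 1)) with (1 + 1 / (a - 1)) by (field; lra).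
    assert ((1 - Rpower (INR T) (1 - a)) / (a - 1) <= 1 / (a - 1))
      by (unfold Rdiv; apply Rmult_le_compat_r; [left; apply Rinv_0_lt_compat|]; lra).
    lra.
  - destruct (Req_EM_T _ _) as [Heq|Hne].
    + apply C2 in Heq. rewrite Heq. pose proof (gharm_sum_1 T HT1). pose proof (ln_ge_half T HT).
      assert (rsum T (gharm 1) * Pm <= (1 + ln (INR T)) * Pm) by (apply Rmult_le_compat_r; lra).
      nra.
    + assert (Ha1 : a < 1) by (assert (a <> 1) by (rewrite <- C2; exact Hne);
                               assert (~ 1 < a) by (rewrite <- C1; exact Hgt); lra).
      pose proof (gharm_sum_lt1 a T (conj Ha0 Ha1) HT1).
      replace (Rpower (INR T) (- (theta * (1 + q) - q))) with (Rpower (INR T) (1 - a) * Pm)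
        by (unfold Pm; rewrite <- Rpower_plus; f_equal; unfold a; ring).
      apply Rle_trans with (/ (1 - a) * (Rpower (INR T) (1 - a) * Pm)); [|right; field; lra].
      replace (rsum T (gharm a) * Pm) with (/ (1 - a) * (((1 - a) * rsum T (gharm a)) * Pm))
        by (field; lra).
      apply Rmult_le_compat_l; [left; apply Rinv_0_lt_compat; lra|].
      apply Rmult_le_compat_r; lra.
Qed.

Lemma Tpow_le_LambdaT q theta T : 0 <= q -> q / (q + 1) < theta -> (2 <= T)%nat ->
  Rpower (INR T) (- (1 - theta)) <= 4 * LambdaT q theta T.
Proof.
  intros Hq Hqt HT. pose proof (rate_exponent_cases q theta Hq) as [C1 _].
  assert (HT1 : 1 <= INR T) by (apply (le_INR 1); lia).
  set (Pm := Rpower (INR T) (- (1 - theta))). assert (HPm : 0 < Pm) by apply Rpower_pos.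
  unfold LambdaT. cbv zeta. fold Pm.
  destruct (Rlt_dec _ theta) as [Hgt|Hgt]; [lra|].
  destruct (Req_EM_T _ _); [pose proof (ln_ge_half T HT); nra|].
  assert (~ 1 < theta * (q + 2) - q) by (rewrite <- C1; exact Hgt).
  assert (Pm <= Rpower (INR T) (- (theta * (1 + q) - q))) by (apply Rle_Rpower; lra).
  lra.
Qed.

(* [+ 1] only serves to make the constant positive. *)
Definition risk_const (q theta eta1 M : R) : R := M * rate_const q theta / (2 * eta1) + 1.

Lemma risk_const_pos q theta eta1 M : 0 <= q -> q / (q + 1) < theta -> 0 < eta1 -> 0 <= M ->
  0 < risk_const q theta eta1 M.
Proof.
  intros Hq Hqt He HM. unfold risk_const.
  assert (0 <= M * rate_const q theta / (2 * eta1)).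
  { apply Rmult_le_pos; [apply Rmult_le_pos; auto; apply rate_const_ge0; auto |].
    left; apply Rinv_0_lt_compat; lra. }
  lra.
Qed.

Lemma telescoped_rate_le q theta eta1 M N T : 0 <= q -> 0 < theta < 1 -> q / (q + 1) < theta ->
  (2 <= T)%nat -> 0 < eta1 -> 0 <= M -> 0 <= N ->
  (N + M * rsum T (gharm (theta * (q + 2) - q))) / (2 * eta1 * Rpower (INR T) (1 - theta))
   <= (2 * N / eta1 + risk_const q theta eta1 M) * LambdaT q theta T.
Proof.
  intros Hq Hth Hqt HT He HM HN.
  pose proof (gharm_sum_rate q theta T Hq Hth Hqt HT) as K1.
  pose proof (Tpow_le_LambdaT q theta T Hq Hqt HT) as K2.
  pose proof (rate_const_ge0 q theta Hq Hqt) as K3.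
  set (S := rsum T (gharm (theta * (q + 2) - q))) in *.
  set (Pm := Rpower (INR T) (- (1 - theta))) in *.
  set (L := LambdaT q theta T) in *. set (K := rate_const q theta) in *.
  assert (EP : / Rpower (INR T) (1 - theta) = Pm) by (unfold Pm; rewrite Rpower_Ropp; reflexivity).
  assert (HP : 0 < Rpower (INR T) (1 - theta)) by apply Rpower_pos.
  assert (Hi : 0 <= / (2 * eta1)) by (left; apply Rinv_0_lt_compat; lra).
  replace ((N + M * S) / (2 * eta1 * Rpower (INR T) (1 - theta))) with
    (N / (2 * eta1) * Pm + M / (2 * eta1) * (S * Pm)) by (rewrite <- EP; field; lra).
  replace ((2 * N / eta1 + risk_const q theta eta1 M) * L) with
    (N / (2 * eta1) * (4 * L) + M / (2 * eta1) * (K * L) + L) by (unfold risk_const; fold K; field; lra).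
  assert (N / (2 * eta1) * Pm <= N / (2 * eta1) * (4 * L)) by (apply Rmult_le_compat_l; [apply Rmult_le_pos|]; auto).
  assert (M / (2 * eta1) * (S * Pm) <= M / (2 * eta1) * (K * L))
    by (apply Rmult_le_compat_l; [apply Rmult_le_pos|]; auto).
  assert (0 < Pm) by apply Rpower_pos.
  lra.
Qed.

Section Iterates.
Variables (X : Type) (H : RKHS X) (Y : R -> Prop) (V Vd : R -> R -> R) (V0 : R)
  (m : nat) (xs : nat -> X) (ys : nat -> R) (q cq theta eta1 kappa : R).
Hypotheses (V_ge0 : forall y a, 0 <= V y a) (V_convex : convex_second V)
  (Vd_left_deriv : is_left_deriv V Vd) (m_pos : (0 < m)%nat) (ys_in_Y : forall i, (i < m)%nat -> Y (ys i))
  (kern_le : forall x, sqrt (kern H x x) <= kappa) (kappa_ge0 : 0 <= kappa)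
  (V_at0_le : forall j, (j < m)%nat -> V (ys j) 0 <= V0)
  (Vd_growth : forall y a, Y y -> Rabs (Vd y a) <= cq * (1 + abspow a q))
  (q_ge0 : 0 <= q) (cq_pos : 0 < cq) (theta_range : 0 < theta < 1) (theta_gt : q / (q + 1) < theta)
  (eta1_pos : 0 < eta1)
  (eta1_le : eta1 <= sqrt (1 - theta) / (sqrt 2 * cq * Rpower (kappa + 1) (q + 1)))
  (eta1_V0 : 4 * V0 * eta1 <= 1 - theta).

Local Notation iter := (gd H Vd m xs ys (step eta1 theta)).
Local Notation risk := (emp_risk H V m xs ys).

Lemma dist2_step_of_norm2 (u f : H) k :
  hnorm2 H u <= norm_const q * Rpower (INR (S k)) (1 - theta) ->
  hdist2 X H (hadd H u (hscal H (- (step eta1 theta (S k) / INR m)) (emp_grad X H Vd m xs ys u))) f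
    <= hdist2 X H u f - 2 * step eta1 theta (S k) * (risk u - risk f)
       + noise_const q theta * Rpower (INR (S k)) (q * (1 - theta) - 2 * theta).
Proof.
  intros Hu.
  pose proof (grad_bound_of_norm2 X H Y Vd m xs ys u q cq theta kappa (S k)
                q_ge0 cq_pos ltac:(lia) kern_le kappa_ge0 ys_in_Y Vd_growth Hu) as HL.
  eapply Rle_trans.
  - apply (dist2_gd_step X H V Vd m xs ys V_convex Vd_left_deriv m_pos u f _ kappa _
             (step_pos eta1 theta (S k) eta1_pos) kern_le kappa_ge0 HL).
  - apply Rplus_le_compat_l.
    apply (sq_step_grad_bound_le q cq theta eta1 kappa (S k)); auto; lia.
Qed.

Lemma iter_norm2_le_sum k : hnorm2 H (iter k) <= norm_const q * ((1 - theta) * rsum k (gharm theta)).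
Proof.
  pose proof (norm_const_ge1 q) as HA.
  assert (Hexp : q * (1 - theta) - 2 * theta <= - theta)
    by (pose proof (q_lt_theta_mul q theta q_ge0 theta_gt); lra).
  induction k as [|k IH].
  - simpl. unfold hnorm2. rewrite hip_zero_l. lra.
  - assert (Hu : hnorm2 H (iter k) <= norm_const q * Rpower (INR (S k)) (1 - theta)).
    { eapply Rle_trans; [exact IH|]. apply Rmult_le_compat_l; [lra|].
      apply gharm_sum_lt1_succ; exact theta_range. }
    pose proof (dist2_step_of_norm2 (iter k) (hzero H) k Hu) as G.
    rewrite <- gd_S, !hdist2_0_r in G.
    assert (Hpow : Rpower (INR (S k)) (q * (1 - theta) - 2 * theta) <= gharm theta k)
      by (apply Rle_Rpower; [apply (le_INR 1); lia | exact Hexp]).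
    pose proof (emp_risk_zero_le X H V m xs ys m_pos V0 V_at0_le).
    pose proof (emp_risk_ge0 X H V m xs ys m_pos (iter k) V_ge0).
    pose proof (gharm_pos theta k). pose proof (noise_const_ge0 q theta ltac:(lra)).
    change (step eta1 theta (S k)) with (eta1 * gharm theta k) in G.
    (* By (R1) 2 eta_t V0 <= (1-theta)/2 t^(-theta); with the noise term (2A-1)(1-theta)/2 t^(-theta)
       this adds up to exactly A (1-theta) t^(-theta), which closes the induction. *)
    assert (2 * (eta1 * gharm theta k) * V0 <= (1 - theta) / 2 * gharm theta k).
    { replace (2 * (eta1 * gharm theta k) * V0) with ((4 * V0 * eta1) * (gharm theta k / 2)) by field.
      replace ((1 - theta) / 2 * gharm theta k) with ((1 - theta) * (gharm theta k / 2)) by field.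
      apply Rmult_le_compat_r; lra. }
    assert (noise_const q theta * Rpower (INR (S k)) (q * (1 - theta) - 2 * theta)
            <= noise_const q theta * gharm theta k) by (apply Rmult_le_compat_l; auto).
    assert (- 2 * (eta1 * gharm theta k) * (risk (iter k) - risk (hzero H))
            <= 2 * (eta1 * gharm theta k) * V0).
    { replace (- 2 * (eta1 * gharm theta k) * (risk (iter k) - risk (hzero H)))
        with (2 * (eta1 * gharm theta k) * (risk (hzero H) - risk (iter k))) by ring.
      apply Rmult_le_compat_l; [nra | lra]. }
    assert (Hsplit : (1 - theta) / 2 * gharm theta k + noise_const q theta * gharm theta k
                = norm_const q * ((1 - theta) * gharm theta k)).
    { unfold noise_const. field. }
    cbn [rsum]. lra.
Qed.

Lemma iter_norm2_le k : hnorm2 H (iter k) <= norm_const q * Rpower (INR (S k)) (1 - theta).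
Proof.
  eapply Rle_trans; [apply iter_norm2_le_sum|].
  apply Rmult_le_compat_l; [pose proof (norm_const_ge1 q); lra | apply gharm_sum_lt1_succ; auto].
Qed.

Lemma excess_risk_telescope (f : H) T :
  rsum T (fun i => 2 * step eta1 theta (S i) * (risk (iter i) - risk f))
  <= hnorm2 H f + noise_const q theta * rsum T (gharm (theta * (q + 2) - q)).
Proof.
  eapply Rle_trans.
  - apply (rsum_telescope (fun i => hdist2 X H (iter i) f) _
             (fun i => noise_const q theta * gharm (theta * (q + 2) - q) i)).
    intros i _. cbv beta.
    pose proof (dist2_step_of_norm2 (iter i) f i (iter_norm2_le i)) as G. rewrite <- gd_S in G.
    replace (Rpower (INR (S i)) (q * (1 - theta) - 2 * theta)) with (gharm (theta * (q + 2) - q) i) in G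
      by (unfold gharm; f_equal; ring).
    lra.
  - rewrite rsum_scal. simpl gd. rewrite hdist2_0_l.
    pose proof (hdist2_ge0 X H (iter T) f). lra.
Qed.

Lemma weighted_excess_risk_le (f : H) T : (2 <= T)%nat ->
  let w i := step eta1 theta (S i) / rsum T (fun s => step eta1 theta (S s)) in
  rsum T (fun i => w i * risk (iter i)) - risk f
  <= (2 * hnorm2 H f / eta1 + risk_const q theta eta1 (noise_const q theta)) * LambdaT q theta T.
Proof.
  intros HT w. set (Seta := rsum T (fun s => step eta1 theta (S s))) in *.
  assert (HSlow : eta1 * Rpower (INR T) (1 - theta) <= Seta).
  { unfold Seta. rewrite (rsum_ext T _ (fun s => eta1 * gharm theta s)) by reflexivity.
    rewrite rsum_scal. apply Rmult_le_compat_l; [lra | apply gharm_sum_ge; lra || lia]. }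
  assert (HSpos : 0 < Seta) by (pose proof (Rpower_pos (INR T) (1 - theta)); nra).
  assert (Hws : rsum T w = 1) by (apply rsum_normalize; exact HSpos).
  replace (rsum T (fun i => w i * risk (iter i)) - risk f) with
    (/ (2 * Seta) * rsum T (fun i => 2 * step eta1 theta (S i) * (risk (iter i) - risk f))).
  2:{ transitivity (rsum T (fun i => w i * risk (iter i)) - risk f * rsum T w); [|rewrite Hws; ring].
      rewrite <- (rsum_scal T (risk f)), rsum_minus, <- rsum_scal.
      apply rsum_ext. intros i _. unfold w. fold Seta. field. lra. }
  pose proof (excess_risk_telescope f T) as Tel.
  pose proof (noise_const_ge0 q theta ltac:(lra)) as HM.
  assert (HN : 0 <= hnorm2 H f) by apply hip_pos.
  assert (HS : 0 <= rsum T (gharm (theta * (q + 2) - q))) by (apply rsum_ge0; intros; left; apply gharm_pos).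
  eapply Rle_trans; [apply Rmult_le_compat_l; [left; apply Rinv_0_lt_compat; lra | exact Tel]|].
  eapply Rle_trans; [|apply telescoped_rate_le; auto].
  unfold Rdiv. rewrite Rmult_comm.
  apply Rmult_le_compat_l; [apply Rplus_le_le_0_compat; [exact HN | apply Rmult_le_pos; assumption]|].
  apply Rinv_le_contravar; [pose proof (Rpower_pos (INR T) (1 - theta)); nra | lra].
Qed.

End Iterates.

Theorem mainTheorem13 :
  forall (q cq theta eta1 kappa : R),
    0 <= q -> 0 < cq -> 0 < theta < 1 -> q / (q + 1) < theta -> 0 < eta1 ->
  exists C1 : R, 0 < C1 /\
  forall (X : Type) (H : RKHS X) (Y : R -> Prop) (V Vd : R -> R -> R) (V0 : R)
         (m : nat) (xs : nat -> X) (ys : nat -> R) (fstar : H) (T : nat),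
    (forall y a, 0 <= V y a) ->
    convex_second V ->
    is_left_deriv V Vd ->
    (0 < m)%nat ->
    (forall i, (i < m)%nat -> Y (ys i)) ->
    is_lub (fun r => exists x, r = sqrt (kern H x x)) kappa ->
    is_lub (fun r => exists y, Y y /\ r = V y 0) V0 ->
    (forall y a, Y y -> Rabs (Vd y a) <= cq * (1 + abspow a q)) ->
    eta1 <= sqrt (1 - theta) / (sqrt 2 * cq * Rpower (kappa + 1) (q + 1)) ->
    4 * V0 * eta1 <= 1 - theta ->
    (2 <= T)%nat ->
    let eta := step eta1 theta in
    let bound := (2 * hnorm2 H fstar / eta1 + C1) * LambdaT q theta T in
    emp_risk H V m xs ys (wavg H Vd m xs ys eta T) - emp_risk H V m xs ys fstar
      <= bound /\
    (forall t, (1 <= t <= T)%nat ->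
       (forall s, (1 <= s <= T)%nat ->
          emp_risk H V m xs ys (iterate H Vd m xs ys eta t)
            <= emp_risk H V m xs ys (iterate H Vd m xs ys eta s)) ->
       emp_risk H V m xs ys (iterate H Vd m xs ys eta t) - emp_risk H V m xs ys fstar
         <= bound).
Proof.
  intros q cq theta eta1 kappa Hq Hcq Hth Hqt He.
  exists (risk_const q theta eta1 (noise_const q theta)).
  split; [apply risk_const_pos, noise_const_ge0; auto; lra|].
  intros X H Y V Vd V0 m xs ys fstar T HV Hc Hd Hm HY [Hkub _] [HV0ub _] HVd R1 R2 HT eta bound.
  assert (Hkern : forall x, sqrt (kern H x x) <= kappa) by (intros x; apply Hkub; exists x; auto).
  assert (Hk0 : 0 <= kappa) by (eapply Rle_trans; [apply sqrt_pos | apply (Hkern (xs 0%nat))]).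
  assert (HV0 : forall j, (j < m)%nat -> V (ys j) 0 <= V0) by (intros j Hj; apply HV0ub; eauto).
  pose proof (weighted_excess_risk_le X H Y V Vd V0 m xs ys q cq theta eta1 kappa HV Hc Hd Hm HY
                Hkern Hk0 HV0 HVd Hq Hcq Hth Hqt He R1 R2 fstar T HT) as Key.
  cbv zeta in Key. fold eta in Key.
  set (Seta := rsum T (fun s => eta (S s))) in Key.
  assert (HS : 0 < Seta) by (apply rsum_pos; [lia | intros; apply step_pos; exact He]).
  assert (Hw : forall i, (i < T)%nat -> 0 <= eta (S i) / Seta)
    by (intros; apply Rlt_le, Rdiv_lt_0_compat; [apply step_pos|]; assumption).
  assert (Hws : rsum T (fun i => eta (S i) / Seta) = 1) by (apply rsum_normalize; exact HS).
  split.
  - eapply Rle_trans; [|exact Key]. apply Rplus_le_compat_r.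
    apply emp_risk_wavg_le; assumption.
  - intros t Ht Hmin. eapply Rle_trans; [|exact Key]. apply Rplus_le_compat_r.
    apply rsum_weights_ge; [exact Hw | exact Hws |].
    intros i Hi. exact (Hmin (S i) ltac:(lia)).
Qed.
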